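(* Let $R$ be a right almost perfect ring and let $I\neq 0$ be a two-sided ideal of $R$. Then the following are equivalent: (i) $I$ is a maximal two-sided ideal of $R$; (ii) $I$ is a prime ideal of $R$; (iii) $I$ is a right primitive ideal of $R$ (i.e., $I$ is the annihilator of some simple right $R$-module).
   Context: Rings are associative with identity $1\neq 0$. A ring $R$ is called right almost perfect if $R/I$ is a right perfect ring for every two-sided ideal $I$ of $R$ with $I\neq 0$ and $I\neq R$. *)

From HB Require Import structures.
From mathcomp Require Import all_boot all_algebra.
Set Implicit Arguments. Unset Strict Implicit. Unset Printing Implicit Defensive.
Import GRing.Theory.
Local Open Scope ring_scope.

Section Ideals.
Variable R : nzRingType.

Definition additive_subgroup (A : R -> Prop) : Prop :=
  A 0 /\ (forall x y, A x -> A y -> A (x - y)).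

Definition right_ideal (A : R -> Prop) : Prop :=
  additive_subgroup A /\ (forall x r, A x -> A (x * r)).

Definition left_ideal (A : R -> Prop) : Prop :=
  additive_subgroup A /\ (forall x r, A x -> A (r * x)).

Definition two_sided_ideal (A : R -> Prop) : Prop :=
  right_ideal A /\ left_ideal A.

Definition proper (A : R -> Prop) : Prop := exists x, ~ A x.

Definition nonzero_set (A : R -> Prop) : Prop := exists x, A x /\ x <> 0.

Definition subset (A B : R -> Prop) : Prop := forall x, A x -> B x.

Definition maximal_right_ideal (A : R -> Prop) : Prop :=
  right_ideal A /\ proper A /\
  (forall B, right_ideal B -> proper B -> subset A B -> subset B A).

Definition maximal_ideal (A : R -> Prop) : Prop :=
  two_sided_ideal A /\ proper A /\
  (forall B, two_sided_ideal B -> proper B -> subset A B -> subset B A).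

Definition prime_ideal (P : R -> Prop) : Prop :=
  two_sided_ideal P /\ proper P /\
  (forall A B, two_sided_ideal A -> two_sided_ideal B ->
     (forall a b, A a -> B b -> P (a * b)) -> subset A P \/ subset B P).

Definition jacobson : R -> Prop :=
  fun x => forall M, maximal_right_ideal M -> M x.

(* rprod a k = a_(k-1) * ... * a_1 * a_0 *)
Fixpoint rprod (a : nat -> R) (k : nat) : R :=
  if k is k'.+1 then a k' * rprod a k' else 1.

Definition right_T_nilpotent (A : R -> Prop) : Prop :=
  forall a : nat -> R, (forall n, A (a n)) -> exists k, rprod a k = 0.

(* semisimple ring: R_R is a semisimple module, i.e. every right ideal is a
   direct summand of R_R *)
Definition semisimple_ring : Prop :=
  forall K, right_ideal K ->
    exists K', right_ideal K' /\ (forall x, K x -> K' x -> x = 0) /\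
               (forall t, exists k k', K k /\ K' k' /\ t = k + k').

(* right modules over R are left modules over the converse ring R^c;
   the right action m.r is  (r : R^c) *: m *)
Definition simple_right_module (M : lmodType R^c) : Prop :=
  (exists m : M, m <> 0) /\
  (forall N : M -> Prop,
     N 0 -> (forall x y, N x -> N y -> N (x - y)) ->
     (forall (r : R^c) x, N x -> N (r *: x)) ->
     (forall x, N x -> x = 0) \/ (forall x, N x)).

Definition right_primitive_ideal (I : R -> Prop) : Prop :=
  exists M : lmodType R^c, simple_right_module M /\
    (forall r : R, I r <-> forall m : M, (r : R^c) *: m = 0).

End Ideals.

(* (S, f) is a quotient ring R/I: f is a surjective ring morphism with
   kernel I.  Quotients are used up to isomorphism. *)
Definition quotient_map (R S : nzRingType) (I : R -> Prop)
  (f : {rmorphism R -> S}) : Prop :=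
  (forall y, exists x, f x = y) /\ (forall x, f x = 0 <-> I x).

(* right perfect (Bass; Lam, FC §23): J = rad R right T-nilpotent and R/J
   semisimple *)
Definition right_perfect (S : nzRingType) : Prop :=
  right_T_nilpotent (@jacobson S) /\
  (forall (T : nzRingType) (f : {rmorphism S -> T}),
      quotient_map (@jacobson S) f -> semisimple_ring T).

Definition right_almost_perfect (R : nzRingType) : Prop :=
  forall I : R -> Prop, two_sided_ideal I -> nonzero_set I -> proper I ->
    forall (S : nzRingType) (f : {rmorphism R -> S}),
      quotient_map I f -> right_perfect S.

From Pilot Require Import Defs.
From HB Require Import structures.
From mathcomp Require Import all_boot all_algebra.
From mathcomp Require Import boolp.
Set Implicit Arguments. Unset Strict Implicit. Unset Printing Implicit Defensive.
Import GRing.Theory.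
Local Open Scope ring_scope.
Local Open Scope quotient_scope.

(* Maximal ideals are prime, and so are annihilators of simple modules, in any
   ring.  Conversely let I <> 0 be prime: S = R/I is a prime ring, and a right
   perfect one since R is right almost perfect.  A nonzero x in J(S) would,
   by primeness, give s_0, s_1, ... with x s_k x s_(k-1) ... x s_0 <> 0 for
   every k, against the T-nilpotency of J(S); so J(S) = 0 and S is
   semisimple.  A semisimple prime ring is simple, so I is maximal.  Finally,
   a maximal right ideal of S pulls back to a maximal right ideal K of R
   containing I, and the annihilator of the simple module R/K is a proper
   ideal containing I, hence equal to I. *)

(** * Ideals and quotients *)

Section SubgroupQuotient.
Variables (V : zmodType) (K : V -> Prop).

(* The unused argument makes the predicate, hence the quotient type, depend on
   the closure proof from which its canonical instances are built. *)
Definition subgroup_pred (_ : K 0 /\ (forall x y, K x -> K y -> K (x - y))) : {pred V} :=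
  fun x => `[< K x >].

Hypothesis subgroupK : K 0 /\ (forall x y, K x -> K y -> K (x - y)).

Lemma subgroup0 : K 0. Proof. by case: subgroupK. Qed.

Lemma subgroupB x y : K x -> K y -> K (x - y). Proof. by case: subgroupK => _; apply. Qed.

Lemma subgroupN x : K x -> K (- x).
Proof. by move=> Kx; rewrite -sub0r; apply: subgroupB => //; apply: subgroup0. Qed.

Lemma subgroupD x y : K x -> K y -> K (x + y).
Proof. by move=> Kx Ky; rewrite -[y]opprK; apply: subgroupB => //; apply: subgroupN. Qed.

Lemma subgroup_pred_closed : zmod_closed (subgroup_pred subgroupK).
Proof.
split; first exact/asboolP/subgroup0.
by move=> x y /asboolP Kx /asboolP Ky; apply/asboolP/subgroupB.
Qed.

HB.instance Definition _ :=
  GRing.isZmodClosed.Build V (subgroup_pred subgroupK) subgroup_pred_closed.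

Definition subgroup_quot := Quotient.quot (subgroup_pred subgroupK).
HB.instance Definition _ := Choice.on subgroup_quot.
HB.instance Definition _ := GRing.Zmodule.on subgroup_quot.

Definition subgroup_pi (x : V) : subgroup_quot := \pi_subgroup_quot x.

Lemma subgroup_pi_eq x y : subgroup_pi x = subgroup_pi y <-> K (x - y).
Proof.
split=> [eq_xy|Kxy].
- suff : x - y \in subgroup_pred subgroupK by move/asboolP.
  by rewrite Quotient.idealrBE; apply/eqP; exact: eq_xy.
- by apply/eqP; rewrite -Quotient.idealrBE; apply/asboolP.
Qed.

Lemma subgroup_pi_surj (q : subgroup_quot) : exists x, subgroup_pi x = q.
Proof. by exists (repr q); rewrite /subgroup_pi reprK. Qed.

Lemma subgroup_pi_repr x : K (repr (subgroup_pi x) - x).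
Proof. by apply/subgroup_pi_eq; rewrite /subgroup_pi reprK. Qed.

Lemma subgroup_piB : zmod_morphism subgroup_pi.
Proof. by move=> x y; rewrite /subgroup_pi !piE. Qed.

HB.instance Definition _ :=
  GRing.isZmodMorphism.Build V subgroup_quot subgroup_pi subgroup_piB.

End SubgroupQuotient.

Section Ideals.
Variable R : nzRingType.
Implicit Types (A B I : R -> Prop).

Lemma rideal0 A : right_ideal A -> A 0.
Proof. by case=> /subgroup0. Qed.

Lemma ridealB A x y : right_ideal A -> A x -> A y -> A (x - y).
Proof. by case=> /subgroupB subA _; apply: subA. Qed.

Lemma ridealMr A x r : right_ideal A -> A x -> A (x * r).
Proof. by case=> _; apply. Qed.

Lemma rideal_not1 A : right_ideal A -> Defs.proper A -> ~ A 1.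
Proof. by move=> idA [x Ax] A1; apply: Ax; rewrite -[x]mul1r; apply: ridealMr. Qed.

Lemma rideal_1B A z : right_ideal A -> A z -> A (1 - z) -> A 1.
Proof. by case=> /subgroupD addA _ Az A1z; rewrite -(subrK z 1) addrC; apply: addA. Qed.

Lemma ideal0 I : two_sided_ideal I -> I 0.
Proof. by case=> /rideal0. Qed.

Lemma idealB I x y : two_sided_ideal I -> I x -> I y -> I (x - y).
Proof. by case=> /ridealB subI _; apply: subI. Qed.

Lemma idealD I x y : two_sided_ideal I -> I x -> I y -> I (x + y).
Proof. by case=> [[/subgroupD addI _] _]; apply: addI. Qed.

Lemma idealMr I x r : two_sided_ideal I -> I x -> I (x * r).
Proof. by case=> /ridealMr mulI _; apply: mulI. Qed.

Lemma idealMl I x r : two_sided_ideal I -> I x -> I (r * x).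
Proof. by case=> _ [_]; apply. Qed.

Lemma two_sided_idealP A : A 0 -> (forall x y, A x -> A y -> A (x - y)) ->
  (forall x r, A x -> A (x * r)) -> (forall x r, A x -> A (r * x)) ->
  two_sided_ideal A.
Proof. by []. Qed.

End Ideals.

Section QuotientRing.
Variables (R : nzRingType) (I : R -> Prop).

(* The second argument is needed by the ring structure ([1 != 0]). *)
Definition quot_ring (idI : two_sided_ideal I) (_ : Defs.proper I) :=
  subgroup_quot idI.1.1.

Hypotheses (idI : two_sided_ideal I) (properI : Defs.proper I).
HB.instance Definition _ := Choice.on (quot_ring idI properI).
HB.instance Definition _ := GRing.Zmodule.on (quot_ring idI properI).

Definition quot_ring_pi (x : R) : quot_ring idI properI := subgroup_pi idI.1.1 x.

HB.instance Definition _ := GRing.isZmodMorphism.Build R (quot_ring idI properI)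
  quot_ring_pi (raddfB (subgroup_pi idI.1.1)).

Lemma quot_ring_pi_eq x y : quot_ring_pi x = quot_ring_pi y <-> I (x - y).
Proof. exact: subgroup_pi_eq. Qed.

Lemma quot_ring_pi_surj (q : quot_ring idI properI) : exists x, quot_ring_pi x = q.
Proof. exact: subgroup_pi_surj. Qed.

Definition quot_ring_mul (a b : quot_ring idI properI) := quot_ring_pi (repr a * repr b).

Lemma quot_ring_mul_pi x y :
  quot_ring_mul (quot_ring_pi x) (quot_ring_pi y) = quot_ring_pi (x * y).
Proof.
apply/quot_ring_pi_eq; set a := repr _; set b := repr _.
have -> : a * b - x * y = (a - x) * b + x * (b - y).
  by rewrite mulrBl mulrBr addrA subrK.
by apply: idealD => //; [apply: idealMr | apply: idealMl] => //;
  apply: subgroup_pi_repr.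
Qed.

Lemma quot_ring_mulA : associative quot_ring_mul.
Proof.
move=> a b c; have [x <-] := quot_ring_pi_surj a.
have [y <-] := quot_ring_pi_surj b; have [z <-] := quot_ring_pi_surj c.
by rewrite !quot_ring_mul_pi mulrA.
Qed.

Lemma quot_ring_mul1 : left_id (quot_ring_pi 1) quot_ring_mul.
Proof. by move=> a; have [x <-] := quot_ring_pi_surj a; rewrite quot_ring_mul_pi mul1r. Qed.

Lemma quot_ring_mulr1 : right_id (quot_ring_pi 1) quot_ring_mul.
Proof. by move=> a; have [x <-] := quot_ring_pi_surj a; rewrite quot_ring_mul_pi mulr1. Qed.

Lemma quot_ring_mulDl : left_distributive quot_ring_mul +%R.
Proof.
move=> a b c; have [x <-] := quot_ring_pi_surj a.
have [y <-] := quot_ring_pi_surj b; have [z <-] := quot_ring_pi_surj c.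
by rewrite -raddfD !quot_ring_mul_pi mulrDl raddfD.
Qed.

Lemma quot_ring_mulDr : right_distributive quot_ring_mul +%R.
Proof.
move=> a b c; have [x <-] := quot_ring_pi_surj a.
have [y <-] := quot_ring_pi_surj b; have [z <-] := quot_ring_pi_surj c.
by rewrite -raddfD !quot_ring_mul_pi mulrDr raddfD.
Qed.

Lemma quot_ring_one_neq0 : quot_ring_pi 1 != 0.
Proof.
apply/eqP; rewrite -(raddf0 quot_ring_pi) quot_ring_pi_eq subr0.
exact: rideal_not1 idI.1 properI.
Qed.

HB.instance Definition _ := GRing.Zmodule_isNzRing.Build (quot_ring idI properI)
  quot_ring_mulA quot_ring_mul1 quot_ring_mulr1 quot_ring_mulDl quot_ring_mulDr
  quot_ring_one_neq0.

Lemma quot_ring_pi_monoid : monoid_morphism quot_ring_pi.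
Proof. by split=> // x y; rewrite -quot_ring_mul_pi. Qed.

HB.instance Definition _ := GRing.isMonoidMorphism.Build R (quot_ring idI properI)
  quot_ring_pi quot_ring_pi_monoid.

Lemma quotient_map_quot_ring_pi : quotient_map I quot_ring_pi.
Proof.
split; first exact: quot_ring_pi_surj.
by move=> x; rewrite -(raddf0 quot_ring_pi) quot_ring_pi_eq subr0.
Qed.

End QuotientRing.

Lemma exists_quotient_ring (R : nzRingType) (I : R -> Prop) :
  two_sided_ideal I -> Defs.proper I ->
  exists (S : nzRingType) (f : {rmorphism R -> S}), quotient_map I f.
Proof. by move=> idI properI; exists (quot_ring idI properI), (quot_ring_pi idI properI);
  apply: quotient_map_quot_ring_pi. Qed.

Section QuotientModule.
Variables (R : nzRingType) (K : R -> Prop).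

Definition quot_module (idK : right_ideal K) := subgroup_quot idK.1.

Hypothesis idK : right_ideal K.

HB.instance Definition _ := Choice.on (quot_module idK).
HB.instance Definition _ := GRing.Zmodule.on (quot_module idK).

Definition quot_module_pi (x : R) : quot_module idK := subgroup_pi idK.1 x.

HB.instance Definition _ := GRing.isZmodMorphism.Build R (quot_module idK)
  quot_module_pi (raddfB (subgroup_pi idK.1)).

Lemma quot_module_pi_eq0 x : quot_module_pi x = 0 <-> K x.
Proof. by rewrite -(raddf0 quot_module_pi) subgroup_pi_eq subr0. Qed.

Lemma quot_module_pi_surj (q : quot_module idK) : exists x, quot_module_pi x = q.
Proof. exact: subgroup_pi_surj. Qed.

Definition quot_module_scale (r : R^c) (q : quot_module idK) :=
  quot_module_pi (repr q * (r : R)).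

Lemma quot_module_scale_pi (r : R^c) x :
  quot_module_scale r (quot_module_pi x) = quot_module_pi (x * (r : R)).
Proof.
apply/subgroup_pi_eq; rewrite -mulrBl; apply: ridealMr => //.
exact: subgroup_pi_repr.
Qed.

Lemma quot_module_scaleA a b v :
  quot_module_scale a (quot_module_scale b v) = quot_module_scale (a * b) v.
Proof.
by have [x <-] := quot_module_pi_surj v; rewrite !quot_module_scale_pi -mulrA.
Qed.

Lemma quot_module_scale1 : left_id 1 quot_module_scale.
Proof.
by move=> v; have [x <-] := quot_module_pi_surj v; rewrite quot_module_scale_pi mulr1.
Qed.

Lemma quot_module_scaleDr : right_distributive quot_module_scale +%R.
Proof.
move=> a u v; have [x <-] := quot_module_pi_surj u; have [y <-] := quot_module_pi_surj v.
by rewrite -raddfD !quot_module_scale_pi mulrDl raddfD.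
Qed.

Lemma quot_module_scaleDl v : {morph quot_module_scale^~ v : a b / a + b}.
Proof.
move=> a b; have [x <-] := quot_module_pi_surj v.
by rewrite !quot_module_scale_pi -raddfD -mulrDr.
Qed.

HB.instance Definition _ := GRing.Zmodule_isLmodule.Build R^c (quot_module idK)
  quot_module_scaleA quot_module_scale1 quot_module_scaleDr quot_module_scaleDl.

Lemma quot_module_scaleE (r : R) x :
  (r : R^c) *: quot_module_pi x = quot_module_pi (x * r).
Proof. exact: quot_module_scale_pi. Qed.

End QuotientModule.

(** * Maximal, prime and primitive ideals *)

Section PrimeIdeals.
Variable R : nzRingType.
Implicit Types (A B I : R -> Prop).

Definition ideal_sum A B : R -> Prop := fun x => exists a b, [/\ A a, B b & a + b = x].

Lemma ideal_sum_two_sided A B :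
  two_sided_ideal A -> two_sided_ideal B -> two_sided_ideal (ideal_sum A B).
Proof.
move=> idA idB; apply: two_sided_idealP.
- by exists 0, 0; rewrite addr0; split=> //; apply: ideal0.
- move=> _ _ [a1 [b1 [Aa1 Bb1 <-]]] [a2 [b2 [Aa2 Bb2 <-]]].
  by exists (a1 - a2), (b1 - b2); rewrite opprD addrACA; split=> //; apply: idealB.
- move=> _ r [a [b [Aa Bb <-]]]; exists (a * r), (b * r).
  by rewrite mulrDl; split=> //; apply: idealMr.
- move=> _ r [a [b [Aa Bb <-]]]; exists (r * a), (r * b).
  by rewrite mulrDr; split=> //; apply: idealMl.
Qed.

Lemma maximal_ideal_comaximal I C : maximal_ideal I -> two_sided_ideal C ->
  ~ Defs.subset C I -> exists c i, [/\ C c, I i & c + i = 1].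
Proof.
move=> [idI [_ maxI]] idC notCI.
have idCI := ideal_sum_two_sided idC idI.
suff : ideal_sum C I 1 by case=> c [i]; exists c, i.
apply: contrapT => notCI1; apply: notCI => c Cc.
apply: (maxI _ idCI); first by exists 1.
- by move=> i Ii; exists 0, i; split=> //; [apply: ideal0 | rewrite add0r].
- by exists c, 0; split=> //; [apply: ideal0 | rewrite addr0].
Qed.

Lemma maximal_ideal_prime I : maximal_ideal I -> prime_ideal I.
Proof.
move=> maxI; have [idI [properI _]] := maxI.
split=> //; split=> // A B idA idB ABI.
have [AI|notAI] := EM (Defs.subset A I); [by left | right=> b Bb].
have [a [i [Aa Ii sum1]]] := maximal_ideal_comaximal maxI idA notAI.
by rewrite -[b]mul1r -sum1 mulrDl; apply: idealD => //; [apply: ABI | apply: idealMr].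
Qed.

Lemma prime_idealP I x y : prime_ideal I -> (forall r, I (x * r * y)) -> I x \/ I y.
Proof.
case=> idI [_ primeI] xRy.
(* [A] contains [x], [B] contains [y], and [A B] lies in [I] by construction. *)
pose A z := forall r s, I (z * r * y * s).
pose B w := forall z, A z -> I (z * w).
have idA : two_sided_ideal A.
  apply: two_sided_idealP.
  - by move=> r s; rewrite !mul0r; apply: ideal0.
  - by move=> u v Au Av r s; rewrite !mulrBl; apply: idealB.
  - by move=> u t Au r s; rewrite -(mulrA u t r); apply: Au.
  - move=> u t Au r s; rewrite -!mulrA; apply: idealMl => //.
    by rewrite !mulrA; apply: Au.
have idB : two_sided_ideal B.
  apply: two_sided_idealP.
  - by move=> z _; rewrite mulr0; apply: ideal0.
  - by move=> u v Bu Bv z Az; rewrite mulrBr; apply: idealB; [|apply: Bu|apply: Bv].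
  - by move=> u t Bu z Az; rewrite mulrA; apply: idealMr => //; apply: Bu.
  - move=> u t Bu z Az; rewrite mulrA; apply: Bu => r s.
    by rewrite -(mulrA z t r); apply: Az.
have [AI|BI] := primeI A B idA idB (fun a b Aa Bb => Bb a Aa).
- by left; apply: AI => r s; apply: idealMr.
- by right; apply: BI => z Az; move: (Az 1 1); rewrite !mulr1.
Qed.

End PrimeIdeals.

(* The right action [m.r] is [(r : R^c) *: m]; this is [m.(x y) = (m.x).y]. *)
Lemma scale_conv_mul (R : nzRingType) (M : lmodType R^c) (x y : R) (m : M) :
  ((x * y : R) : R^c) *: m = (y : R^c) *: ((x : R^c) *: m).
Proof. by rewrite scalerA. Qed.

Definition annihilator (R : nzRingType) (M : lmodType R^c) : R -> Prop :=
  fun r => forall m : M, (r : R^c) *: m = 0.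

Lemma annihilator_two_sided (R : nzRingType) (M : lmodType R^c) :
  two_sided_ideal (annihilator M).
Proof.
apply: two_sided_idealP.
- by move=> m; rewrite scale0r.
- by move=> x y annx anny m; rewrite (scalerBl (x : R^c) (y : R^c)) annx anny subr0.
- by move=> x r annx m; rewrite scale_conv_mul annx scaler0.
- by move=> x r annx m; rewrite scale_conv_mul annx.
Qed.

Lemma annihilator_simple_prime (R : nzRingType) (M : lmodType R^c) :
  simple_right_module M -> prime_ideal (annihilator M).
Proof.
move=> [[m0 m0_neq0] simpleM]; have idann := annihilator_two_sided M.
split=> //; split.
  by exists 1 => ann1; apply: m0_neq0; rewrite -(ann1 m0) scale1r.
move=> A B idA idB ABann.
have [Bann|notBann] := EM (Defs.subset B (annihilator M)); [by right | left=> a Aa m].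
pose N (n : M) := forall b, B b -> (b : R^c) *: n = 0.
case: (simpleM N).
- by move=> b _; rewrite scaler0.
- by move=> u v Nu Nv b Bb; rewrite scalerBr Nu // Nv // subr0.
- by move=> r u Nu b Bb; rewrite -scale_conv_mul; apply/Nu/(idealMl _ idB).
- by move=> N0; apply: N0 => b Bb; rewrite -scale_conv_mul ABann.
- by move=> Nfull; case: notBann => b Bb n; apply: Nfull.
Qed.

Lemma right_primitive_ideal_prime (R : nzRingType) (I : R -> Prop) :
  right_primitive_ideal I -> prime_ideal I.
Proof.
case=> M [/annihilator_simple_prime primeM annI].
have eqI : I = annihilator M by apply/funext => r; apply/propext/annI.
by rewrite eqI.
Qed.

(** * Prime rings and the Jacobson radical *)

Definition prime_ring (S : nzRingType) : Prop :=
  forall a b : S, (forall s, a * s * b = 0) -> a = 0 \/ b = 0.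

Lemma quotient_prime_ring (R S : nzRingType) (I : R -> Prop) (f : {rmorphism R -> S}) :
  prime_ideal I -> quotient_map I f -> prime_ring S.
Proof.
move=> primeI [f_surj kerf] a b.
have [[x <-] [y <-]] := (f_surj a, f_surj b) => aSb.
suff [/kerf|/kerf] : I x \/ I y by [left | right].
by apply: (prime_idealP primeI) => r; apply/kerf; rewrite !rmorphM aSb.
Qed.

(* If [x <> 0], primeness lets us choose [s_k] with
   [p_(k+1) := x s_k p_k <> 0]; the factors [x s_k] then contradict
   T-nilpotency. *)
Lemma prime_ring_T_nilpotent_eq0 (S : nzRingType) (A : S -> Prop) :
  prime_ring S -> (forall x r, A x -> A (x * r)) -> right_T_nilpotent A ->
  forall x, A x -> x = 0.
Proof.
move=> primeS AMr nilA x Ax; apply: contrapT => x_neq0.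
have /choice [g gP] : forall p : S, exists s, p <> 0 -> x * s * p <> 0.
  move=> p; have [->|p_neq0] := EM (p = 0); first by exists 0.
  apply: contrapT => /forallNP xSp.
  have xSp0 s : x * s * p = 0 by apply: contrapT => xsp; apply: (xSp s) => _.
  by case: (primeS x p xSp0) => [/x_neq0 | /p_neq0].
pose fix p k := if k is k'.+1 then x * g (p k') * p k' else 1.
pose a k := x * g (p k).
have rprod_a k : rprod a k = p k by elim: k => //= k ->.
have p_neq0 k : p k <> 0 by elim: k => [|k IHk] /=; [apply/eqP/oner_neq0 | apply: gP].
have [k] := nilA a (fun n => AMr _ _ Ax).
by rewrite rprod_a; apply: p_neq0.
Qed.

Lemma jacobson0 (S : nzRingType) : jacobson (0 : S).
Proof. by move=> M [idM _]; apply: rideal0. Qed.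

Lemma jacobsonMr (S : nzRingType) (x r : S) : jacobson x -> jacobson (x * r).
Proof. by move=> Jx M maxM; apply: (ridealMr _ maxM.1); apply: Jx. Qed.

Definition semiprimitive (S : nzRingType) : Prop := forall x : S, jacobson x -> x = 0.

Lemma exists_maximal_right_ideal (S : nzRingType) :
  semiprimitive S -> exists M : S -> Prop, maximal_right_ideal M.
Proof.
move=> J0; apply: contrapT => /forallNP noM.
have /eqP := oner_neq0 S; apply; apply: J0 => M /noM [].
Qed.

Lemma right_perfect_semisimple (S : nzRingType) :
  right_perfect S -> semiprimitive S -> semisimple_ring S.
Proof.
move=> [_ perfS] J0; apply: (perfS S idfun); split; first by move=> y; exists y.
by move=> x; split=> [/= ->|/J0]; [apply: jacobson0|].
Qed.

Definition simple_ring (S : nzRingType) : Prop :=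
  forall K : S -> Prop, two_sided_ideal K -> nonzero_set K -> forall y, K y.

(* A complement [K'] of a nonzero ideal [K] satisfies [K' S K <= K' :&: K = 0],
   so [K' = 0] and [K = S]. *)
Lemma semisimple_prime_ring_simple (S : nzRingType) :
  semisimple_ring S -> prime_ring S -> simple_ring S.
Proof.
move=> ssS primeS K idK [b [Kb b_neq0]].
have [K' [idK' [capKK' sumKK']]] := ssS K idK.1.
have K'0 a : K' a -> a = 0.
  move=> K'a; have aSb s : a * s * b = 0.
    apply: capKK'; first exact: idealMl.
    by apply: (ridealMr _ idK'); apply: (ridealMr _ idK').
  by case: (primeS a b aSb) => [// | /b_neq0].
have [k [k' [Kk [/K'0 -> sum1]]]] := sumKK' 1.
by move=> y; rewrite -[y]mul1r sum1 addr0; apply: idealMr.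
Qed.

Section QuotientMap.
Variables (R S : nzRingType) (f : {rmorphism R -> S}).
Hypothesis f_surj : forall y, exists x, f x = y.

Definition image (A : R -> Prop) : S -> Prop := fun y => exists2 x, A x & f x = y.

Lemma image_right_ideal A : right_ideal A -> right_ideal (image A).
Proof.
move=> idA; split; first split.
- by exists 0; [apply: rideal0 | rewrite rmorph0].
- move=> _ _ [u Au <-] [v Av <-]; exists (u - v); last by rewrite rmorphB.
  exact: ridealB.
- move=> _ r [u Au <-]; have [t <-] := f_surj r; exists (u * t); last by rewrite rmorphM.
  exact: ridealMr.
Qed.

Lemma image_two_sided_ideal A : two_sided_ideal A -> two_sided_ideal (image A).
Proof.
move=> idA; split; first exact/image_right_ideal/idA.1.
split; first exact: (image_right_ideal idA.1).1.
move=> _ r [u Au <-]; have [t <-] := f_surj r; exists (t * u); last by rewrite rmorphM.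
exact: idealMl.
Qed.

(* If [f z = 1] with [z] in [A], then [1 - z] is in the kernel, hence in [A]. *)
Lemma image_proper A : right_ideal A -> Defs.proper A ->
  (forall x, f x = 0 -> A x) -> Defs.proper (image A).
Proof.
move=> idA properA kerA; exists 1 => -[z Az fz1].
apply: (rideal_not1 idA properA); apply: (rideal_1B idA Az); apply: kerA.
by rewrite rmorphB rmorph1 fz1 subrr.
Qed.

Lemma preimage_maximal_right_ideal (M : S -> Prop) :
  maximal_right_ideal M -> maximal_right_ideal (fun x => M (f x)).
Proof.
move=> [idM [[m notMm] maxM]].
have idfM : right_ideal (fun x => M (f x)).
  split; first split.
  - by rewrite rmorph0; apply: rideal0.
  - by move=> x z Mx Mz; rewrite rmorphB; apply: ridealB.
  - by move=> x r Mx; rewrite rmorphM; apply: ridealMr.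
split=> //; split; first by have [x fx] := f_surj m; exists x; rewrite fx.
move=> B idB properB fMB x Bx.
have kerB z : f z = 0 -> B z by move=> fz0; apply: fMB; rewrite fz0; apply: rideal0.
apply: (maxM _ (image_right_ideal idB) (image_proper idB properB kerB)); last by exists x.
move=> y My; have [z fz] := f_surj y; exists z => //.
by apply: fMB; rewrite fz.
Qed.

End QuotientMap.

Lemma maximal_ideal_of_simple_quotient (R S : nzRingType) (I : R -> Prop)
    (f : {rmorphism R -> S}) :
  two_sided_ideal I -> Defs.proper I -> quotient_map I f -> simple_ring S ->
  maximal_ideal I.
Proof.
move=> idI properI [f_surj kerf] simpleS; split=> //; split=> // B idB properB IB x Bx.
apply: contrapT => notIx.
have kerB z : f z = 0 -> B z by move/kerf/IB.
have idfB := image_two_sided_ideal f_surj idB.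
apply: (rideal_not1 idfB.1 (image_proper idB.1 properB kerB)).
by apply: simpleS => //; exists (f x); split; [exists x | move/kerf].
Qed.

Lemma quot_module_simple (R : nzRingType) (K : R -> Prop) (maxK : maximal_right_ideal K) :
  simple_right_module (quot_module maxK.1).
Proof.
have [idK [properK Kmax]] := maxK.
split.
  by exists (quot_module_pi maxK.1 1) => /quot_module_pi_eq0; apply: rideal_not1.
move=> N N0 NB NZ.
pose B x := N (quot_module_pi maxK.1 x).
have idB : right_ideal B.
  split; first split.
  - by rewrite /B raddf0.
  - by move=> x y Bx By; rewrite /B raddfB; apply: NB.
  - by move=> x r Bx; rewrite /B -quot_module_scaleE; apply: NZ.
have KB x : K x -> B x by move/quot_module_pi_eq0; rewrite /B => ->.
have [properB|improperB] := EM (Defs.proper B).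
- left=> q; have [x <-] := quot_module_pi_surj q.
  by move=> Nx; apply/quot_module_pi_eq0/(Kmax B idB properB KB).
- right=> q; have [x <-] := quot_module_pi_surj q.
  by apply: contrapT => notBx; apply: improperB; exists x.
Qed.

(* The annihilator of [R/K] is a proper ideal containing [I], hence equal to [I]. *)
Lemma right_primitive_of_maximal (R : nzRingType) (I K : R -> Prop) :
  maximal_ideal I -> maximal_right_ideal K -> Defs.subset I K ->
  right_primitive_ideal I.
Proof.
move=> [idI [_ Imax]] maxK IK.
exists (quot_module maxK.1); split; first exact: quot_module_simple.
have annE r : annihilator (quot_module maxK.1) r <-> forall x, K (x * r).
  split=> [annr x|Kr q].
  - by apply/(quot_module_pi_eq0 maxK.1); rewrite -quot_module_scaleE annr.
  - have [x <-] := quot_module_pi_surj q.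
    by rewrite quot_module_scaleE; apply/quot_module_pi_eq0.
have Iann : Defs.subset I (annihilator (quot_module maxK.1)).
  by move=> r Ir; apply/annE => x; apply: IK; apply: idealMl.
have properAnn : Defs.proper (annihilator (quot_module maxK.1)).
  have [x notKx] := maxK.2.1; exists 1 => /annE/(_ x).
  by rewrite mulr1; exact: notKx.
move=> r; split; first exact: Iann.
exact: (Imax _ (annihilator_two_sided _) properAnn Iann).
Qed.

Lemma almost_perfect_prime_ideal_maximal_primitive (R : nzRingType) (I : R -> Prop) :
  right_almost_perfect R -> nonzero_set I -> prime_ideal I ->
  maximal_ideal I /\ right_primitive_ideal I.
Proof.
move=> almostR nzI primeI; have [idI [properI _]] := primeI.
have [S [f quotf]] := exists_quotient_ring idI properI.
have perfS := almostR I idI nzI properI S f quotf.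
have primeS := quotient_prime_ring primeI quotf.
have J0 : semiprimitive S := prime_ring_T_nilpotent_eq0 primeS (@jacobsonMr S) perfS.1.
have simpleS := semisimple_prime_ring_simple (right_perfect_semisimple perfS J0) primeS.
have maxI := maximal_ideal_of_simple_quotient idI properI quotf simpleS.
have [M maxM] := exists_maximal_right_ideal J0.
split=> //; apply: (right_primitive_of_maximal maxI (preimage_maximal_right_ideal quotf.1 maxM)).
by move=> x /quotf.2 fx0; rewrite /= fx0; apply: (rideal0 maxM.1).
Qed.

Theorem corollary3p3 (R : nzRingType) (I : R -> Prop) :
  right_almost_perfect R -> two_sided_ideal I -> nonzero_set I ->
  (maximal_ideal I <-> prime_ideal I) /\
  (prime_ideal I <-> right_primitive_ideal I).
Proof.
(* Each of the three notions already includes [two_sided_ideal I]. *)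
move=> almostR _ nzI.
have primeE := almost_perfect_prime_ideal_maximal_primitive almostR nzI.
split; split.
- exact: maximal_ideal_prime.
- by case/primeE.
- by case/primeE.
- exact: right_primitive_ideal_prime.
Qed.
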